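(* In the acoustic setting, suppose $A<0$ near $\rho_1\in(\rho_-,\rho_+)$, $B(\rho_1)>0$, and $A(\rho)+1=C(\rho)(\rho-\rho_1)^2$ near $\rho_1$ with $C(\rho)>0$ (a double root of $A=-1$). Then the circle $\rho=\rho_1$ is a horizon of the $(+)$ family (i.e. $\rho^+(t)\equiv\rho_1$ is a solution, with $d\varphi^+/dt=B(\rho_1)/\rho_1\neq 0$), and $d\rho^+/dt>0$ for all $\rho\neq\rho_1$ in a neighborhood of $\rho_1$; consequently $(+)$ trajectories starting slightly below $\rho_1$ satisfy $\rho^+(t)\to\rho_1$ as $t\to+\infty$, and those starting slightly above satisfy $\rho^+(t)\to\rho_1$ as $t\to-\infty$.
   Context: Acoustic metric in the plane with polar coordinates $(\rho,\varphi)$: Hamiltonian $H=(\tau+A\xi_\rho+B\xi_\varphi/\rho)^2-\xi_\rho^2-(\xi_\varphi/\rho)^2$, $A=A(\rho)$, $B=B(\rho)$ smooth. The ergoregion is the annulus $\rho_-<\rho<\rho_+$ where $A^2+B^2>1$. Zero-energy null geodesics are the null bicharacteristics with $\tau=0$ parametrized by $t$; the sign in $\xi_\rho=\frac{-AB\pm\sqrt{A^2+B^2-1}}{A^2-1}\,\xi_\varphi/\rho$ defines the $(\pm)$ family. With $s=\sqrt{A^2+B^2-1}$, the equations of motion in the ergoregion are $$\frac{d\rho^\pm}{dt}=\frac{A(A^2+B^2-1)\pm Bs}{A^2+B^2},\qquad \frac{d\varphi^\pm}{dt}=\frac{s\,(Bs\mp A)}{\rho\,(A^2+B^2)}.$$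 A horizon of the $(\pm)$ family is a circle $\{\rho=c\}$ in the ergoregion which is a closed trajectory of that family. *)

From Stdlib Require Import Reals Lra.
Open Scope R_scope.

Definition smooth_pos (f : R -> R) : Prop :=
  exists D : nat -> R -> R,
    (forall x, 0 < x -> D 0%nat x = f x) /\
    (forall (n : nat) (x : R), 0 < x -> derivable_pt_lim (D n) x (D (S n) x)).

Definition sfun (A B : R -> R) (rho : R) : R :=
  sqrt (A rho ^ 2 + B rho ^ 2 - 1).

Definition drho_plus (A B : R -> R) (rho : R) : R :=
  (A rho * (A rho ^ 2 + B rho ^ 2 - 1) + B rho * sfun A B rho)
  / (A rho ^ 2 + B rho ^ 2).

Definition dphi_plus (A B : R -> R) (rho : R) : R :=
  sfun A B rho * (B rho * sfun A B rho - A rho)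
  / (rho * (A rho ^ 2 + B rho ^ 2)).

Definition plus_trajectory (A B : R -> R) (I : R -> Prop) (r phi : R -> R) : Prop :=
  forall t, I t ->
    derivable_pt_lim r t (drho_plus A B (r t)) /\
    derivable_pt_lim phi t (dphi_plus A B (r t)).

(* A horizon of the (+) family: a circle {rho = c} in the ergoregion
   (rm, rp) which is a closed trajectory of the (+) family: the curve
   t |-> (c, phi t) solves the equations of motion for all t and comes back
   to its starting point after a positive time, having wound k <> 0 times. *)
Definition horizon_plus (A B : R -> R) (rm rp c : R) : Prop :=
  rm < c < rp /\
  exists phi : R -> R,
    plus_trajectory A B (fun _ => True) (fun _ => c) phi /\
    exists (T : R) (k : Z), 0 < T /\ k <> 0%Z /\
      phi T = phi 0 + 2 * PI * IZR k.

From Stdlib Require Import Reals Lra Classical.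
From Coquelicot Require Import Coquelicot.
Open Scope R_scope.

(* At [rho1] we have [A = -1], hence [s = B] and the numerator of [d rho^+/dt]
   vanishes while [d phi^+/dt = B / rho1 <> 0]: the circle is a closed orbit.
   Near [rho1], [-1 < A < 0] and [B > 0] make that numerator
   [-|A| s^2 + B s] positive, because [B^2 - A^2 s^2 = (1 - A^2)(A^2 + B^2)].
   Smoothness gives [|d rho^+/dt| <= K |rho - rho1|], so along a solution
   starting below [rho1] the quantity [(rho1 - rho) e^(K t)] is nondecreasing:
   the solution increases but never reaches [rho1], and since the velocity is
   bounded below away from [rho1] it converges to [rho1].  Reflecting
   [rho -> 2 rho1 - rho], [t -> -t] handles solutions starting above. *)

Lemma derivable_pt_lim_continuity_pt (f : R -> R) x l :
  derivable_pt_lim f x l -> continuity_pt f x.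
Proof. intro H. apply derivable_continuous_pt. exists l. exact H. Qed.

Lemma ex_derive_continuity_pt (f : R -> R) x :
  ex_derive f x -> continuity_pt f x.
Proof.
  intros [l Hl]. apply (derivable_pt_lim_continuity_pt _ _ l), is_derive_Reals, Hl.
Qed.

Lemma continuity_pt_in_interval (f : R -> R) x lo hi :
  continuity_pt f x -> lo < f x < hi ->
  exists eta, 0 < eta /\ forall y, Rabs (y - x) < eta -> lo < f y < hi.
Proof.
  intros Hc Hx.
  destruct (Hc (Rmin (f x - lo) (hi - f x))) as [al [Hal H]].
  { apply Rmin_case; lra. }
  exists al; split; [exact Hal|]. intros y Hy.
  destruct (Req_dec y x) as [->|Hne]; [lra|].
  assert (Hd := H y (conj (conj I (not_eq_sym Hne)) Hy)).
  unfold R_dist in Hd. revert Hd.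
  apply Rmin_case_strong; intros; apply Rabs_def2 in Hd; lra.
Qed.

Lemma le_of_derive_nonneg (f f' : R -> R) a b :
  a <= b -> (forall t, a <= t <= b -> derivable_pt_lim f t (f' t)) ->
  (forall t, a < t < b -> 0 <= f' t) -> f a <= f b.
Proof.
  intros Hab Hd Hpos. destruct (Req_dec a b) as [->|Hne]; [lra|].
  destruct (MVT_cor2 f f' a b) as [x [Hx Hxab]]; [lra | exact Hd |].
  assert (0 <= f' x) by (apply Hpos; lra). nra.
Qed.

Lemma continuous_induction (r : R -> R) m c :
  (forall t, 0 <= t -> continuity_pt r t) ->
  (forall t, 0 <= t -> (forall s, 0 <= s < t -> m < r s < c) -> m < r t < c) ->
  forall t, 0 <= t -> m < r t < c.
Proof.
  intros Hc Hstep t1 Ht1.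
  set (E := fun t => 0 <= t <= t1 /\ forall s, 0 <= s <= t -> m < r s < c).
  assert (E0 : E 0).
  { split; [lra|]. intros s Hs. replace s with 0 by lra.
    apply Hstep; [lra | intros; lra]. }
  destruct (completeness E) as [ts [Hub Hlub]].
  { exists t1. intros t [Ht _]. lra. }
  { exists 0. exact E0. }
  assert (Hts0 : 0 <= ts) by (apply Hub; exact E0).
  assert (Hts1 : ts <= t1) by (apply Hlub; intros t [Ht _]; lra).
  assert (Hbefore : forall s, 0 <= s < ts -> m < r s < c).
  { intros s Hs. destruct (classic (exists t, E t /\ s < t)) as [[t [[_ Et] Hst]]|Hn].
    - apply Et; lra.
    - exfalso. assert (ts <= s); [|lra]. apply Hlub. intros t Et.
      destruct (Rle_dec t s) as [Hle|Hgt]; [exact Hle|].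
      exfalso; apply Hn; exists t; split; [exact Et | lra]. }
  assert (Hts : m < r ts < c) by (apply Hstep; assumption).
  destruct (Req_dec ts t1) as [<-|Hne]; [exact Hts|].
  exfalso.
  destruct (continuity_pt_in_interval r ts m c (Hc ts Hts0) Hts) as [eta [Heta Hnear]].
  set (t' := Rmin (ts + eta / 2) t1).
  assert (Et' : E t').
  { split; [unfold t'; split; [apply Rmin_case; lra | apply Rmin_r]|].
    intros s Hs. destruct (Rlt_dec s ts); [apply Hbefore; lra|].
    apply Hnear. assert (s <= ts + eta / 2) by (eapply Rle_trans; [apply Hs | apply Rmin_l]).
    apply Rabs_def1; lra. }
  assert (t' <= ts) by (apply Hub; exact Et').
  revert H. unfold t'. apply Rmin_case; lra.
Qed.

(* Gronwall's inequality for [r' <= K (c - r)], in differential form. *)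
Lemma gap_exp_nondecreasing (r r' : R -> R) (c K a b : R) :
  a <= b -> (forall t, a <= t <= b -> derivable_pt_lim r t (r' t)) ->
  (forall t, a < t < b -> r' t <= K * (c - r t)) ->
  (c - r a) * exp (K * a) <= (c - r b) * exp (K * b).
Proof.
  intros Hab Hd Hle.
  apply (le_of_derive_nonneg (fun t => (c - r t) * exp (K * t))
           (fun t => exp (K * t) * (K * (c - r t) - r' t)) a b Hab).
  - intros t Ht. specialize (Hd t Ht). apply is_derive_Reals in Hd. apply is_derive_Reals.
    assert (Hr' : Derive r t = r' t) by (apply is_derive_unique; exact Hd).
    auto_derive; [exists (r' t); exact Hd|].
    change (Derive (fun x => r x) t) with (Derive r t). rewrite Hr'. ring.
  - intros t Ht. specialize (Hle t Ht). pose proof (exp_pos (K * t)). nra.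
Qed.

Section ForwardConvergence.

Variables (G r : R -> R) (m c K : R).
Hypothesis G_pos : forall x, m < x < c -> 0 < G x.
Hypothesis G_le_linear : forall x, m < x < c -> G x <= K * (c - x).
Hypothesis G_cont : forall x, m < x < c -> continuity_pt G x.
Hypothesis r_solves : forall t, 0 <= t -> derivable_pt_lim r t (G (r t)).
Hypothesis r0_in : m < r 0 < c.

Lemma solution_stays_in : forall t, 0 <= t -> m < r t < c.
Proof.
  apply continuous_induction.
  - intros t Ht. exact (derivable_pt_lim_continuity_pt _ _ _ (r_solves t Ht)).
  - intros t Ht Hbefore. split.
    + assert (r 0 <= r t); [|lra].
      apply (le_of_derive_nonneg r (fun s => G (r s)) 0 t Ht); [intros; apply r_solves; lra|].
      intros s Hs. apply Rlt_le, G_pos, Hbefore; lra.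
    + assert (Hgap : (c - r 0) * exp (K * 0) <= (c - r t) * exp (K * t)).
      { apply (gap_exp_nondecreasing r (fun s => G (r s)) c K 0 t Ht);
          [intros; apply r_solves; lra|].
        intros s Hs. apply G_le_linear, Hbefore; lra. }
      rewrite Rmult_0_r, exp_0 in Hgap. pose proof (exp_pos (K * t)). nra.
Qed.

Lemma solution_nondecreasing a b : 0 <= a <= b -> r a <= r b.
Proof.
  intros Hab. apply (le_of_derive_nonneg r (fun t => G (r t))); [lra | intros; apply r_solves; lra|].
  intros t Ht. apply Rlt_le, G_pos, solution_stays_in; lra.
Qed.

Lemma solution_exceeds b : b < c -> exists T, 0 <= T /\ b < r T.
Proof.
  intros Hbc. destruct (Rlt_dec b (r 0)) as [Hlt|Hge]; [exists 0; split; [lra | exact Hlt]|].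
  apply NNPP. intro Hn.
  assert (Hall : forall t, 0 <= t -> r t <= b).
  { intros t Ht. destruct (Rle_dec (r t) b) as [Hle|Hgt]; [exact Hle|].
    exfalso; apply Hn; exists t; split; [exact Ht | lra]. }
  (* [G] attains a positive minimum [g0] on [[r 0, b]], so [r t >= r 0 + g0 t]. *)
  destruct (continuity_ab_min G (r 0) b) as [x0 [Hmin Hx0]]; [lra | intros; apply G_cont; lra|].
  assert (Hg0 : 0 < G x0) by (apply G_pos; lra).
  set (t := (b - r 0 + 1) / G x0).
  assert (Ht : 0 < t) by (unfold t; apply Rdiv_lt_0_compat; lra).
  destruct (MVT_cor2 r (fun s => G (r s)) 0 t) as [x [Hx Hxt]];
    [lra | intros; apply r_solves; lra |].
  assert (Hrx0 : r 0 <= r x) by (apply solution_nondecreasing; lra).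
  assert (Hrxb := Hall x ltac:(lra)).
  assert (G x0 <= G (r x)) by (apply Hmin; lra).
  assert (Hrt := Hall t ltac:(lra)).
  assert (G x0 * t = b - r 0 + 1) by (unfold t; field; lra).
  nra.
Qed.

Lemma solution_converges :
  forall eps, 0 < eps -> exists T, forall t, T <= t -> Rabs (r t - c) < eps.
Proof.
  intros eps Heps. destruct (solution_exceeds (c - eps)) as [T [HT HbT]]; [lra|].
  exists T. intros t Ht.
  assert (r T <= r t) by (apply solution_nondecreasing; lra).
  assert (Hin := solution_stays_in t ltac:(lra)).
  apply Rabs_def1; lra.
Qed.

End ForwardConvergence.

Lemma solution_converges_backward (G r : R -> R) (c M K : R) :
  (forall x, c < x < M -> 0 < G x) ->
  (forall x, c < x < M -> G x <= K * (x - c)) ->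
  (forall x, c < x < M -> continuity_pt G x) ->
  (forall t, t <= 0 -> derivable_pt_lim r t (G (r t))) ->
  c < r 0 < M ->
  forall eps, 0 < eps -> exists T, forall t, t <= T -> Rabs (r t - c) < eps.
Proof.
  intros Gpos Gle Gcont Hr H0 eps Heps.
  set (reflect := fun y => 2 * c - y).
  destruct (solution_converges (fun y => G (reflect y)) (fun t => reflect (r (- t)))
              (reflect M) c K) with (eps := eps) as [T HT]; unfold reflect in *.
  - intros x Hx. apply Gpos; lra.
  - intros x Hx. replace (c - x) with (2 * c - x - c) by ring. apply Gle; lra.
  - intros x Hx.
    apply (continuity_pt_comp (fun y => 2 * c - y) G x); [|apply Gcont; lra].
    apply (derivable_pt_lim_continuity_pt _ _ (-1)), is_derive_Reals.
    auto_derive; [exact I | ring].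
  - intros t Ht. replace (2 * c - (2 * c - r (- t))) with (r (- t)) by ring.
    assert (Hd := Hr (- t) ltac:(lra)). apply is_derive_Reals in Hd. apply is_derive_Reals.
    assert (Hr' : Derive r (- t) = G (r (- t))) by (apply is_derive_unique; exact Hd).
    auto_derive; [exists (G (r (- t))); exact Hd|].
    change (Derive (fun x => r x) (- t)) with (Derive r (- t)). rewrite Hr'. ring.
  - rewrite Ropp_0. lra.
  - exact Heps.
  - exists (- T). intros t Ht. specialize (HT (- t) ltac:(lra)).
    rewrite Ropp_involutive in HT.
    replace (r t - c) with (- (2 * c - r t - c)) by ring. rewrite Rabs_Ropp. exact HT.
Qed.

Lemma smooth_pos_ex_derive (f : R -> R) x : smooth_pos f -> 0 < x -> ex_derive f x.
Proof.
  intros [D [HD0 HD]] Hx. exists (D 1%nat x).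
  apply is_derive_ext_loc with (D 0%nat).
  - exists (mkposreal x Hx). intros y Hy. apply HD0.
    change (Rabs (y - x) < x) in Hy. apply Rabs_def2 in Hy. lra.
  - apply is_derive_Reals, HD, Hx.
Qed.

Lemma linear_bound_of_derive_at_zero (f : R -> R) x0 l :
  derivable_pt_lim f x0 l -> f x0 = 0 ->
  exists d, 0 < d /\ forall x, Rabs (x - x0) < d -> Rabs (f x) <= (Rabs l + 1) * Rabs (x - x0).
Proof.
  intros Hl Hf0. destruct (Hl 1 Rlt_0_1) as [d Hd].
  exists d. split; [apply cond_pos|]. intros x Hx.
  destruct (Req_dec x x0) as [->|Hne].
  { rewrite Hf0, Rminus_diag, !Rabs_R0. lra. }
  assert (Hh : x - x0 <> 0) by lra.
  specialize (Hd (x - x0) Hh Hx).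
  replace (x0 + (x - x0)) with x in Hd by ring. rewrite Hf0, Rminus_0_r in Hd.
  replace (Rabs (f x)) with (Rabs (f x / (x - x0)) * Rabs (x - x0))
    by (rewrite <- Rabs_mult; f_equal; field; exact Hh).
  apply Rmult_le_compat_r; [apply Rabs_pos|].
  pose proof (Rabs_triang_inv (f x / (x - x0)) l). lra.
Qed.

Section PlusFamily.

Variables A B : R -> R.

Lemma sfun_sonic x : A x = -1 -> 0 <= B x -> sfun A B x = B x.
Proof.
  intros HA HB. unfold sfun. rewrite HA.
  replace ((-1) ^ 2 + B x ^ 2 - 1) with (B x ^ 2) by ring. apply sqrt_pow2, HB.
Qed.

Lemma drho_plus_sonic x : A x = -1 -> 0 <= B x -> drho_plus A B x = 0.
Proof.
  intros HA HB. unfold drho_plus. rewrite (sfun_sonic x HA HB), HA. unfold Rdiv. ring.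
Qed.

Lemma dphi_plus_sonic x : x <> 0 -> A x = -1 -> 0 <= B x -> dphi_plus A B x = B x / x.
Proof.
  intros Hx HA HB. unfold dphi_plus. rewrite (sfun_sonic x HA HB), HA.
  field. split; [exact Hx | nra].
Qed.

Lemma circle_plus_trajectory c phi0 : c <> 0 -> A c = -1 -> 0 <= B c ->
  plus_trajectory A B (fun _ => True) (fun _ => c) (fun t => phi0 + B c / c * t).
Proof.
  intros Hc HA HB t _. split.
  - rewrite (drho_plus_sonic c HA HB). apply derivable_pt_lim_const.
  - rewrite (dphi_plus_sonic c Hc HA HB). apply is_derive_Reals. auto_derive; [exact I | ring].
Qed.

Lemma horizon_plus_sonic rm rp c : rm < c < rp -> 0 < c -> A c = -1 -> 0 < B c ->
  horizon_plus A B rm rp c.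
Proof.
  intros Hrc Hc HA HB. split; [exact Hrc|].
  exists (fun t => 0 + B c / c * t).
  split; [apply circle_plus_trajectory; lra|].
  exists (2 * PI * c / B c), 1%Z. pose proof PI_RGT_0.
  split; [|split; [discriminate|]].
  - apply Rdiv_lt_0_compat; nra.
  - simpl. field. split; lra.
Qed.

Lemma drho_plus_pos x : -1 < A x < 0 -> 0 < B x -> 1 < A x ^ 2 + B x ^ 2 ->
  0 < drho_plus A B x.
Proof.
  intros HA HB Herg. unfold drho_plus. apply Rdiv_lt_0_compat; [|nra].
  set (s := sfun A B x).
  assert (Hs : 0 < s) by (apply sqrt_lt_R0; lra).
  assert (Hs2 : s ^ 2 = A x ^ 2 + B x ^ 2 - 1) by (apply pow2_sqrt; lra).
  assert (Hgap : B x ^ 2 - A x ^ 2 * s ^ 2 > 0).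
  { rewrite Hs2.
    replace (B x ^ 2 - A x ^ 2 * (A x ^ 2 + B x ^ 2 - 1))
      with ((1 - A x ^ 2) * (A x ^ 2 + B x ^ 2)) by ring.
    apply Rmult_lt_0_compat; nra. }
  assert (B x + A x * s > 0) by nra.
  rewrite <- Hs2. nra.
Qed.

Lemma ex_derive_drho_plus x : ex_derive A x -> ex_derive B x -> 1 < A x ^ 2 + B x ^ 2 ->
  ex_derive (drho_plus A B) x.
Proof. intros HA HB H. unfold drho_plus, sfun. auto_derive; repeat split; auto; lra. Qed.

End PlusFamily.

Section DoubleRoot.

Variables (A B C : R -> R) (rm rp rho1 e0 : R).
Hypothesis hA : smooth_pos A.
Hypothesis hB : smooth_pos B.
Hypothesis hrm : 0 <= rm.
Hypothesis hergo : forall rho, 0 < rho -> (rm < rho < rp <-> A rho ^ 2 + B rho ^ 2 > 1).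
Hypothesis hrho1 : rm < rho1 < rp.
Hypothesis hB1 : B rho1 > 0.
Hypothesis he0 : 0 < e0.
Hypothesis hnear : forall rho, 0 < rho -> Rabs (rho - rho1) < e0 ->
  A rho < 0 /\ C rho > 0 /\ A rho + 1 = C rho * (rho - rho1) ^ 2.

Lemma rho1_pos : 0 < rho1.
Proof. lra. Qed.

Lemma A_rho1 : A rho1 = -1.
Proof.
  destruct (hnear rho1 rho1_pos) as [_ [_ H]]; [rewrite Rminus_diag, Rabs_R0; lra|].
  rewrite Rminus_diag in H. simpl in H. lra.
Qed.

Lemma drho_plus_rho1 : drho_plus A B rho1 = 0.
Proof. apply drho_plus_sonic; [exact A_rho1 | lra]. Qed.

Lemma ex_derive_drho_plus_ergo x : rm < x < rp -> ex_derive (drho_plus A B) x.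
Proof.
  intros Hx. assert (0 < x) by lra.
  apply ex_derive_drho_plus; try apply smooth_pos_ex_derive; auto. apply hergo; auto.
Qed.

Lemma drho_plus_near_rho1 : exists d K, 0 < d /\ forall x, Rabs (x - rho1) < d ->
  continuity_pt (drho_plus A B) x /\
  Rabs (drho_plus A B x) <= K * Rabs (x - rho1) /\
  (x <> rho1 -> 0 < drho_plus A B x).
Proof.
  destruct (continuity_pt_in_interval B rho1 0 (B rho1 + 1)) as [dB [HdB HBnear]];
    [apply ex_derive_continuity_pt, smooth_pos_ex_derive, rho1_pos; exact hB | lra |].
  destruct (ex_derive_drho_plus_ergo rho1 hrho1) as [l Hl]. apply is_derive_Reals in Hl.
  destruct (linear_bound_of_derive_at_zero _ _ _ Hl drho_plus_rho1) as [dK [HdK Hlin]].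
  set (d := Rmin (Rmin e0 dB) (Rmin dK (Rmin (rho1 - rm) (rp - rho1)))).
  assert (Hd : 0 < d) by (unfold d; repeat apply Rmin_glb_lt; lra).
  exists d, (Rabs l + 1). split; [exact Hd|]. intros x Hx.
  unfold d in Hx.
  apply Rmin_Rgt in Hx as [[He HdBx]%Rmin_Rgt [HdKx [Hm Hp]%Rmin_Rgt]%Rmin_Rgt].
  apply Rabs_def2 in Hm. apply Rabs_def2 in Hp.
  assert (Hergo : rm < x < rp) by lra.
  split; [apply ex_derive_continuity_pt, ex_derive_drho_plus_ergo, Hergo|].
  split; [apply Hlin, HdKx|].
  intros Hne. assert (0 < x) by lra.
  destruct (hnear x ltac:(lra) He) as [HAx [HCx Hroot]].
  (* the double root: [A x + 1 = C x (x - rho1)^2 > 0] *)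
  assert ((x - rho1) ^ 2 > 0) by (apply pow2_gt_0; lra).
  apply drho_plus_pos; [nra | apply HBnear in HdBx; lra | apply hergo; auto].
Qed.

Lemma drho_plus_pos_near_rho1 : exists delta, 0 < delta /\
  forall rho, 0 < Rabs (rho - rho1) < delta -> drho_plus A B rho > 0.
Proof.
  destruct drho_plus_near_rho1 as [d [K [Hd Hnear]]]. exists d. split; [exact Hd|].
  intros rho [Hpos Hlt]. apply (Hnear rho Hlt).
  intros ->. rewrite Rminus_diag, Rabs_R0 in Hpos. lra.
Qed.

Lemma plus_converges_from_below : exists delta, 0 < delta /\
  forall r phi : R -> R,
    plus_trajectory A B (fun t => 0 <= t) r phi ->
    rho1 - delta < r 0 < rho1 ->
    forall eps, 0 < eps -> exists T, forall t, T <= t -> Rabs (r t - rho1) < eps.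
Proof.
  destruct drho_plus_near_rho1 as [d [K [Hd Hnear]]]. exists d. split; [exact Hd|].
  intros r phi Htraj Hr0.
  assert (Hin : forall x, rho1 - d < x < rho1 -> Rabs (x - rho1) < d)
    by (intros x Hx; rewrite Rabs_left; lra).
  apply (solution_converges (drho_plus A B) r (rho1 - d) rho1 K).
  - intros x Hx. apply (Hnear x (Hin x Hx)). intros ->. lra.
  - intros x Hx. destruct (Hnear x (Hin x Hx)) as [_ [Hlin _]].
    rewrite (Rabs_left (x - rho1)) in Hlin by lra. replace (rho1 - x) with (- (x - rho1)) by ring.
    pose proof (Rle_abs (drho_plus A B x)). lra.
  - intros x Hx. apply (Hnear x (Hin x Hx)).
  - intros t Ht. apply (Htraj t Ht).
  - exact Hr0.
Qed.

Lemma plus_converges_from_above : exists delta, 0 < delta /\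
  forall r phi : R -> R,
    plus_trajectory A B (fun t => t <= 0) r phi ->
    rho1 < r 0 < rho1 + delta ->
    forall eps, 0 < eps -> exists T, forall t, t <= T -> Rabs (r t - rho1) < eps.
Proof.
  destruct drho_plus_near_rho1 as [d [K [Hd Hnear]]]. exists d. split; [exact Hd|].
  intros r phi Htraj Hr0.
  assert (Hin : forall x, rho1 < x < rho1 + d -> Rabs (x - rho1) < d)
    by (intros x Hx; rewrite Rabs_right; lra).
  apply (solution_converges_backward (drho_plus A B) r rho1 (rho1 + d) K).
  - intros x Hx. apply (Hnear x (Hin x Hx)). intros ->. lra.
  - intros x Hx. destruct (Hnear x (Hin x Hx)) as [_ [Hlin _]].
    rewrite (Rabs_right (x - rho1)) in Hlin by lra. pose proof (Rle_abs (drho_plus A B x)). lra.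
  - intros x Hx. apply (Hnear x (Hin x Hx)).
  - intros t Ht. apply (Htraj t Ht).
  - exact Hr0.
Qed.

End DoubleRoot.

Theorem mainTheorem5
  (A B C : R -> R) (rm rp rho1 : R)
  (hA : smooth_pos A) (hB : smooth_pos B)
  (hrm : 0 <= rm) (hrmp : rm < rp)
  (hergo : forall rho, 0 < rho -> (rm < rho < rp <-> A rho ^ 2 + B rho ^ 2 > 1))
  (hrho1 : rm < rho1 < rp)
  (hB1 : B rho1 > 0)
  (hnear : exists eps, 0 < eps /\
     forall rho, 0 < rho -> Rabs (rho - rho1) < eps ->
       A rho < 0 /\ C rho > 0 /\ A rho + 1 = C rho * (rho - rho1) ^ 2) :
  horizon_plus A B rm rp rho1 /\
  (forall phi0 : R,
     plus_trajectory A B (fun _ => True) (fun _ => rho1)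
       (fun t => phi0 + B rho1 / rho1 * t)) /\
  B rho1 / rho1 <> 0 /\
  (exists delta, 0 < delta /\
     forall rho, 0 < Rabs (rho - rho1) < delta -> drho_plus A B rho > 0) /\
  (exists delta, 0 < delta /\
     forall r phi : R -> R,
       plus_trajectory A B (fun t => 0 <= t) r phi ->
       rho1 - delta < r 0 < rho1 ->
       forall eps, 0 < eps -> exists T, forall t, T <= t -> Rabs (r t - rho1) < eps) /\
  (exists delta, 0 < delta /\
     forall r phi : R -> R,
       plus_trajectory A B (fun t => t <= 0) r phi ->
       rho1 < r 0 < rho1 + delta ->
       forall eps, 0 < eps -> exists T, forall t, t <= T -> Rabs (r t - rho1) < eps).
Proof.
  destruct hnear as [e0 [He0 Hnear]].
  assert (Hpos : 0 < rho1) by (apply (rho1_pos rm rp); assumption).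
  assert (HA1 : A rho1 = -1) by (apply (A_rho1 A C rm rp rho1 e0); assumption).
  split; [apply horizon_plus_sonic; auto|].
  split; [intros phi0; apply circle_plus_trajectory; lra|].
  split; [apply Rmult_integral_contrapositive; split; [lra | apply Rinv_neq_0_compat; lra]|].
  split; [apply (drho_plus_pos_near_rho1 A B C rm rp rho1 e0); assumption|].
  split; [apply (plus_converges_from_below A B C rm rp rho1 e0); assumption|].
  apply (plus_converges_from_above A B C rm rp rho1 e0); assumption.
Qed.
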